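(* Let $A$ be a commutative $\mathbb F_p$-algebra, $B=A[z_1,\ldots,z_n]$, $a_1,\ldots,a_n\in A$ a regular sequence in $A$, $\mathfrak a=Aa_1+\cdots+Aa_n$, and $\mathcal D:B^n\to B$ the $A$-linear map $\mathcal D(h_1,\ldots,h_n)=\sum_{i=1}^n(\partial_{z_i}h_i-a_ih_i)$. Let $f=\sum_r c_rz^r\in B$ with $c_r\in A$ (where $z^r=z_1^{r_1}\cdots z_n^{r_n}$). If $f^p\in\mathrm{Im}\,\mathcal D$, then $c_r^p\in\mathfrak a$ for all $r$.
   Context: $\partial_{z_i}$ denotes the formal partial derivative with respect to $z_i$ on $B$. *)

(* Polynomials in n variables over a commutative ring A are
   represented by their coefficient functions on multi-indices
   r : {ffun 'I_n -> nat} (r i = exponent of z_i), required to be finitely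
   supported. *)
From HB Require Import structures.
From mathcomp Require Import all_boot all_order all_algebra.
Set Implicit Arguments. Unset Strict Implicit. Unset Printing Implicit Defensive.
Import Order.TTheory GRing.Theory Num.Theory.
Local Open Scope ring_scope.

Definition mindex (n : nat) := {ffun 'I_n -> nat}.

Definition coefs (A : comPzRingType) (n : nat) := mindex n -> A.

Definition finsupp (A : comPzRingType) (n : nat) (c : coefs A n) : Prop :=
  exists N : nat, forall r : mindex n, (exists i, (N <= r i)%N) -> c r = 0.

Definition mmax (n : nat) (r : mindex n) : nat := \max_(i < n) r i.

Definition cmul (A : comPzRingType) (n : nat) (f g : coefs A n) : coefs A n :=
  fun r => \sum_(s : {ffun 'I_n -> 'I_(mmax r).+1} | [forall i, (s i <= r i)%N])
             f [ffun i => (s i : nat)] * g [ffun i => (r i - s i)%N].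

Definition cone (A : comPzRingType) (n : nat) : coefs A n :=
  fun r => if [forall i, r i == 0%N] then 1 else 0.

Definition cpow (A : comPzRingType) (n : nat) (f : coefs A n) (k : nat) : coefs A n :=
  iter k (cmul f) (@cone A n).

Definition cderiv (A : comPzRingType) (n : nat) (i : 'I_n) (h : coefs A n) : coefs A n :=
  fun r => (r i).+1%:R * h [ffun j => (r j + (j == i))%N].

Definition Dmap (A : comPzRingType) (n : nat) (a : 'I_n -> A) (h : 'I_n -> coefs A n)
  : coefs A n :=
  fun r => \sum_(i < n) (cderiv i (h i) r - a i * h i r).

Definition in_ideal_prefix (A : comPzRingType) (n : nat) (a : 'I_n -> A) (k : nat) (x : A)
  : Prop :=
  exists u : 'I_n -> A, x = \sum_(i < n | (i < k)%N) u i * a i.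

Definition in_ideal (A : comPzRingType) (n : nat) (a : 'I_n -> A) (x : A) : Prop :=
  in_ideal_prefix a n x.

Definition regular_seq (A : comPzRingType) (n : nat) (a : 'I_n -> A) : Prop :=
  (forall (i : 'I_n) (x : A), in_ideal_prefix a i (x * a i) -> in_ideal_prefix a i x)
  /\ ~ in_ideal a 1.

(* Write p = p' + 1.  For a multi-index q, the A-linear functional
     psi_q(h) = sum_(t in [0, p']^n) (prod_i a_i^(p' - t_i) t_i!) h_(pq + t)
   maps d_(z_i) h - a_i h into a_i^p A: the sum telescopes in t_i, the top term carries
   the factor p = 0 and the bottom one the factor a_i^p.  So psi_q maps Im D into
   (a_1^p, ..., a_n^p).  As f^p = sum_r c_r^p z^(pr) in characteristic p,
   psi_q(f^p) = (a_1 ... a_n)^p' c_q^p, and for a regular sequence the colon ideal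
   (a_1^p, ..., a_n^p) : (a_1 ... a_n)^p' is (a_1, ..., a_n). *)

From mathcomp Require Import boolp.
From HB Require Import structures.
From mathcomp Require Import all_boot all_order all_algebra.
Set Implicit Arguments. Unset Strict Implicit. Unset Printing Implicit Defensive.
Import GRing.Theory.
Local Open Scope ring_scope.

Section IdealsModulo.
Variable A : comPzRingType.
Implicit Types (K : A -> Prop) (b c x y : A) (l t : seq A).

Definition is_ideal K := K 0 /\ (forall x y, K x -> K y -> K (x + y)) /\
  (forall c x, K x -> K (c * x)).

Definition zero_ideal : A -> Prop := fun x => x = 0.

Definition adjoin K b : A -> Prop := fun x => exists k c, K k /\ x = k + c * b.

Definition adjoin_seq K l := foldl adjoin K l.

Definition regular_mod K b := forall x, K (b * x) -> K x.

Fixpoint regular_seq_mod K l :=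
  if l is b :: l' then regular_mod K b /\ regular_seq_mod (adjoin K b) l' else True.

Lemma ideal0 K : is_ideal K -> K 0.
Proof. by case. Qed.

Lemma idealD K x y : is_ideal K -> K x -> K y -> K (x + y).
Proof. by move=> [_ [hD _]]; apply: hD. Qed.

Lemma idealM K c x : is_ideal K -> K x -> K (c * x).
Proof. by move=> [_ [_ hM]]; apply: hM. Qed.

Lemma idealN K x : is_ideal K -> K x -> K (- x).
Proof. by move=> hK hx; rewrite -mulN1r; apply: idealM. Qed.

Lemma idealB K x y : is_ideal K -> K x -> K y -> K (x - y).
Proof. by move=> hK hx hy; apply: idealD => //; apply: idealN. Qed.

Lemma is_ideal_zero : is_ideal zero_ideal.
Proof.
split; first by [].
split; first by move=> x y -> ->; rewrite addr0.
by move=> c x ->; rewrite mulr0.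
Qed.

Lemma is_ideal_adjoin K b : is_ideal K -> is_ideal (adjoin K b).
Proof.
move=> hK; split.
  by exists 0, 0; rewrite mul0r addr0; split => //; apply: ideal0.
split.
- move=> x y [k [c [hk ->]]] [k' [c' [hk' ->]]]; exists (k + k'), (c + c').
  by split; [apply: idealD | rewrite mulrDl addrACA].
- move=> d x [k [c [hk ->]]]; exists (d * k), (d * c).
  by split; [apply: idealM | rewrite mulrDr mulrA].
Qed.

Lemma adjoinC K b c : adjoin (adjoin K b) c = adjoin (adjoin K c) b.
Proof.
apply/predeqP => x; split.
- move=> [k [d [[k' [e [hk' ->]]] ->]]]; exists (k' + d * c), e.
  by split; [exists k', d | rewrite addrAC].
- move=> [k [d [[k' [e [hk' ->]]] ->]]]; exists (k' + d * b), e.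
  by split; [exists k', d | rewrite addrAC].
Qed.

Lemma is_ideal_adjoin_seq K l : is_ideal K -> is_ideal (adjoin_seq K l).
Proof. by elim: l K => //= b l IH K hK; apply/IH/is_ideal_adjoin. Qed.

Lemma adjoin_seq_adjoin K l c : adjoin_seq (adjoin K c) l = adjoin (adjoin_seq K l) c.
Proof. by elim: l K => [|d l IH] K //=; rewrite adjoinC IH. Qed.

Lemma adjoin_seq_rcons K l c : adjoin_seq K (rcons l c) = adjoin (adjoin_seq K l) c.
Proof. by rewrite /adjoin_seq foldl_rcons. Qed.

Lemma adjoin_seq_zeroP (T : eqType) (b : T -> A) (s : seq T) x : uniq s ->
  adjoin_seq zero_ideal (map b s) x <-> exists u : T -> A, x = \sum_(i <- s) u i * b i.
Proof.
elim/last_ind: s x => [|s i IH] x.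
  move=> _; split; first by move=> ->; exists (fun=> 0); rewrite big_nil.
  by case=> u; rewrite big_nil.
rewrite rcons_uniq => /andP [hi hs]; rewrite map_rcons adjoin_seq_rcons; split.
- move=> [y [c [/IH [] // u -> ->]]].
  exists (fun j => if j == i then c else u j); rewrite big_rcons eqxx /=.
  congr (_ + _); apply: eq_big_seq => j hj.
  by case: eqP => // hji; move: hi; rewrite -hji hj.
- move=> [u ->]; rewrite big_rcons /=.
  by exists (\sum_(j <- s) u j * b j), (u i); split => //; apply/IH => //; exists u.
Qed.

Lemma regular_seq_mod_rcons K l c :
  regular_seq_mod K (rcons l c) <-> regular_seq_mod K l /\ regular_mod (adjoin_seq K l) c.
Proof.
elim: l K => [|b l IH] K /=; first by split; [case | case].
by rewrite IH; tauto.
Qed.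

Lemma regular_seq_mod_nth K l :
  (forall j, (j < size l)%N -> regular_mod (adjoin_seq K (take j l)) (nth 0 l j)) ->
  regular_seq_mod K l.
Proof.
move=> h; suff: forall j, (j <= size l)%N -> regular_seq_mod K (take j l).
  by move/(_ (size l) (leqnn _)); rewrite take_size.
elim=> [|j IH] hj; first by rewrite take0.
rewrite (take_nth 0 hj); apply/regular_seq_mod_rcons; split; last exact: h.
exact/IH/ltnW.
Qed.

Lemma regular_modX K b k : regular_mod K b -> regular_mod K (b ^+ k).
Proof.
move=> hb; elim: k => [|k IH] x; first by rewrite expr0 mul1r.
by rewrite exprS -mulrA => /hb /IH.
Qed.

Lemma regular_mod_cons_tail K b t : is_ideal K ->
  regular_seq_mod K (b :: t) -> regular_mod (adjoin_seq K t) b.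
Proof.
move=> hK; elim/last_ind: t => [|t c IH]; first by case.
rewrite -rcons_cons => /regular_seq_mod_rcons [hbt hc] x.
rewrite adjoin_seq_rcons => -[y [v [hy hxe]]].
have hKt := is_ideal_adjoin_seq t hK.
have /hc : adjoin_seq K (b :: t) (c * v).
  rewrite /= adjoin_seq_adjoin; exists (- y), x; split; first exact: idealN.
  by rewrite mulrC [x * b]mulrC hxe addKr.
rewrite /= adjoin_seq_adjoin => -[y' [z [hy' hv]]].
have /(IH hbt) hx : adjoin_seq K t (b * (x - z * c)).
  have -> : b * (x - z * c) = y + c * y'.
    rewrite mulrBr hxe hv mulrDl.
    have -> : b * (z * c) = z * b * c by rewrite mulrA [b * z]mulrC.
    by rewrite -addrA addrK mulrC.
  by apply: idealD => //; apply: idealM.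
by exists (x - z * c), z; rewrite subrK.
Qed.

Lemma regular_seq_mod_adjoinX K b t e : is_ideal K ->
  regular_seq_mod K (b :: t) -> regular_seq_mod (adjoin K (b ^+ e.+1)) t.
Proof.
move=> hK; elim/last_ind: t => [|t c IH] // hreg.
move: (hreg); rewrite -rcons_cons => /regular_seq_mod_rcons [hbt hc].
apply/regular_seq_mod_rcons; split; first exact: IH.
have hKt := is_ideal_adjoin_seq t hK.
have hb := regular_mod_cons_tail hK hbt.
move: hc; rewrite /= !adjoin_seq_adjoin => hc.
elim: e {IH} => [|e IHe]; first by rewrite expr1.
move=> x [y [w [hy hxe]]].
have /IHe [y1 [z [hy1 hx]]] : adjoin (adjoin_seq K t) (b ^+ e.+1) (c * x).
  by exists y, (w * b); split => //; rewrite hxe [b ^+ e.+2]exprS mulrA.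
have /(regular_modX (k:=e.+1) hb) hcz : adjoin_seq K t (b ^+ e.+1 * (c * z - w * b)).
  have -> : b ^+ e.+1 * (c * z - w * b) = y - c * y1.
    have hy' : y = c * x - w * b ^+ e.+2 by rewrite hxe addrK.
    rewrite hy' hx [c * (_ + _)]mulrDr addrAC [c * y1 + _]addrC addrK mulrBr.
    rewrite [b ^+ e.+2]exprSr mulrCA [b ^+ e.+1 * z]mulrC mulrCA.
    by rewrite [b ^+ e.+1 * (w * b)]mulrCA.
  by apply: idealB => //; apply: idealM.
have /hc [y2 [v [hy2 hz]]] : adjoin (adjoin_seq K t) b (c * z).
  by exists (c * z - w * b), w; rewrite subrK.
exists (y1 + y2 * b ^+ e.+1), v; split.
  by apply: idealD => //; rewrite mulrC; apply: idealM.
by rewrite hx hz mulrDl -addrA -mulrA -exprS.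
Qed.

Lemma regular_seq_mod_pow K l e : is_ideal K ->
  regular_seq_mod K l -> regular_seq_mod K (map (fun x => x ^+ e.+1) l).
Proof.
elim: l K => //= c l IH K hK [hc hl]; split; first exact: regular_modX.
apply: (regular_seq_mod_adjoinX e hK); split => //.
by apply: IH => //; apply: is_ideal_adjoin.
Qed.

Definition prod_pow (k : nat) l := \prod_(y <- l) y ^+ k.

Lemma adjoin_seq_pow_colon K l k : is_ideal K -> regular_seq_mod K l -> forall x,
  adjoin_seq K (map (fun y => y ^+ k.+1) l) (x * prod_pow k l) -> adjoin_seq K l x.
Proof.
elim: l K => [|b l IH] K hK /=; first by move=> _ x; rewrite /prod_pow big_nil mulr1.
move=> [hb hl].
have hKl := is_ideal_adjoin_seq (map (fun y => y ^+ k.+1) l) hK.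
have hbl : regular_mod (adjoin_seq K (map (fun y => y ^+ k.+1) l)) b.
  apply: regular_mod_cons_tail => //; split => //.
  by apply: (regular_seq_mod_pow k) => //; apply: is_ideal_adjoin.
(* Cancel the factors [b] of [b ^+ k] one at a time: [b] is regular modulo the
   ideal generated by the powered tail. *)
suff: forall e x, adjoin_seq K (b ^+ e.+1 :: map (fun y => y ^+ k.+1) l)
    (x * b ^+ e * prod_pow k l) -> adjoin_seq (adjoin K b) l x.
  by move=> H x; rewrite /prod_pow big_cons mulrA => /H.
elim=> [|e IHe] x /=.
  by rewrite expr1 expr0 mulr1 => /(IH _ (is_ideal_adjoin b hK) hl).
rewrite adjoin_seq_adjoin => -[y [w [hy hxe]]].
apply: IHe => /=; rewrite adjoin_seq_adjoin.
exists (x * b ^+ e * prod_pow k l - w * b ^+ e.+1), w; split; last by rewrite subrK.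
apply: hbl; rewrite mulrBr.
have -> : b * (x * b ^+ e * prod_pow k l) = y + w * b ^+ e.+2.
  by rewrite -hxe exprS !mulrA [b * x]mulrC.
by rewrite [b ^+ e.+2]exprS mulrCA addrK.
Qed.

End IdealsModulo.

Arguments zero_ideal {A}.
Arguments is_ideal_zero {A}.

Section RegularSequence.
Variables (A : comPzRingType) (n : nat) (a : 'I_n -> A).

Lemma take_enum_ord j : (j <= n)%N ->
  take j (enum 'I_n) = [seq i <- enum 'I_n | (val i < j)%N].
Proof.
move=> hj; apply: (inj_map val_inj).
rewrite map_take val_enum_ord take_iota (minn_idPl hj).
by rewrite -(filter_iota_ltn 0 hj) -val_enum_ord filter_map.
Qed.

Lemma in_ideal_prefixE j x : (j <= n)%N ->
  in_ideal_prefix a j x <-> adjoin_seq zero_ideal (take j (map a (enum 'I_n))) x.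
Proof.
move=> hj; rewrite -map_take adjoin_seq_zeroP ?take_uniq ?enum_uniq //.
rewrite take_enum_ord //.
by split=> -[u ->]; exists u; rewrite big_filter big_enum_cond.
Qed.

Lemma regular_seq_mod_zero : regular_seq a -> regular_seq_mod zero_ideal (map a (enum 'I_n)).
Proof.
move=> [hr _]; apply: regular_seq_mod_nth => j; rewrite size_map size_enum_ord => hj.
have hi : nth (Ordinal hj) (enum 'I_n) j = Ordinal hj.
  by apply: val_inj; rewrite /= nth_enum_ord.
rewrite (nth_map (Ordinal hj)) ?size_enum_ord // hi => x.
rewrite -!in_ideal_prefixE ?(ltnW hj) // mulrC.
exact: (hr (Ordinal hj)).
Qed.

Lemma regular_seq_colon k x : regular_seq a ->
  (exists u : 'I_n -> A, x * \prod_i a i ^+ k = \sum_i u i * a i ^+ k.+1) -> in_ideal a x.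
Proof.
move=> /regular_seq_mod_zero hreg [u hx].
rewrite /in_ideal in_ideal_prefixE // take_oversize ?size_map ?size_enum_ord //.
apply: (adjoin_seq_pow_colon (k := k) is_ideal_zero hreg).
rewrite -map_comp adjoin_seq_zeroP ?enum_uniq //; exists u.
- by rewrite /prod_pow big_map !big_enum; exact: hx.
- by rewrite -enumT size_enum_ord.
Qed.

End RegularSequence.

Section Convolution.
Variables (A : comPzRingType) (n : nat).

Definition box (K : nat) := {ffun 'I_n -> 'I_K.+1}.
Definition bval K (s : box K) : mindex n := [ffun i => (s i : nat)].
Definition box_of K (m : mindex n) : box K := [ffun i => inord (m i)].
Definition in_box K (m : mindex n) := [forall i, (m i <= K)%N].

Definition madd (u v : mindex n) : mindex n := [ffun i => (u i + v i)%N].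
Definition msub (u v : mindex n) : mindex n := [ffun i => (u i - v i)%N].
Definition mle (u v : mindex n) := [forall i, (u i <= v i)%N].
Definition mzero : mindex n := [ffun => 0%N].

Lemma bval_inj K : injective (@bval K).
Proof.
move=> s t /ffunP h; apply/ffunP => i; apply: val_inj.
by have := h i; rewrite !ffunE.
Qed.

Lemma in_box_bval K (s : box K) : in_box K (bval s).
Proof. by apply/forallP => i; rewrite ffunE -ltnS ltn_ord. Qed.

Lemma bval_box_of K m : in_box K m -> bval (box_of K m) = m.
Proof. by move=> /forallP h; apply/ffunP => i; rewrite !ffunE inordK // ltnS h. Qed.

Lemma in_box_mmax (m : mindex n) : in_box (mmax m) m.
Proof. apply/forallP => i; exact: (@leq_bigmax _ (fun j => m j) i). Qed.

Lemma in_box_mzero K : in_box K mzero.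
Proof. by apply/forallP => i; rewrite ffunE. Qed.

Lemma in_box_maddr K u t : in_box K (madd u t) -> in_box K t.
Proof.
move=> /forallP h; apply/forallP => i; apply: leq_trans (h i).
by rewrite ffunE leq_addl.
Qed.

Lemma maddC u v : madd u v = madd v u.
Proof. by apply/ffunP => i; rewrite !ffunE addnC. Qed.

Lemma maddA u v w : madd u (madd v w) = madd (madd u v) w.
Proof. by apply/ffunP => i; rewrite !ffunE addnA. Qed.

Lemma madd0m u : madd mzero u = u.
Proof. by apply/ffunP => i; rewrite !ffunE. Qed.

Lemma in_box_maddl K u t : in_box K (madd u t) -> in_box K u.
Proof. by rewrite maddC; apply: in_box_maddr. Qed.

Lemma sum_box_eq K m (G : mindex n -> A) :
  \sum_(s : box K | bval s == m) G (bval s) = if in_box K m then G m else 0.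
Proof.
case: ifP => hm.
  rewrite (big_pred1 (box_of K m)) ?bval_box_of // => s /=.
  apply/eqP/eqP => [hs|->]; last exact: bval_box_of.
  by apply: bval_inj; rewrite bval_box_of.
rewrite big1 // => s /eqP hs.
by move: (in_box_bval s); rewrite hs hm.
Qed.

Lemma sum_box_delta K m (G : mindex n -> A) : (~~ in_box K m -> G m = 0) ->
  \sum_(s : box K) (if bval s == m then G (bval s) else 0) = G m.
Proof. by move=> h; rewrite -big_mkcond sum_box_eq; case: ifP => // /negbT /h. Qed.

Lemma sum_box_transfer K1 K2 (P : pred (mindex n)) (F : mindex n -> A) :
  (forall m, P m -> in_box K1 m && in_box K2 m) ->
  \sum_(s : box K1 | P (bval s)) F (bval s) = \sum_(t : box K2 | P (bval t)) F (bval t).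
Proof.
move=> hP.
transitivity (\sum_(s : box K1 | P (bval s))
                \sum_(t : box K2 | bval t == bval s) F (bval t)).
  apply: eq_bigr => s hs; rewrite sum_box_eq.
  by case/andP: (hP _ hs) => _ ->.
rewrite (exchange_big_dep (fun t : box K2 => P (bval t))) /=; last first.
  by move=> s t hs /eqP ->.
apply: eq_bigr => t ht.
transitivity (\sum_(s : box K1 | bval s == bval t) F (bval s)).
  apply: eq_big => s; last by move=> /andP [_ /eqP ->].
  by apply/andP/eqP => [[_ /eqP ->] // | e]; rewrite e.
by rewrite sum_box_eq; case/andP: (hP _ ht) => ->.
Qed.

Lemma cmul_box K (f g : coefs A n) r : in_box K r ->
  cmul f g r = \sum_(s : box K) \sum_(t : box K)
    (if madd (bval s) (bval t) == r then f (bval s) * g (bval t) else 0).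
Proof.
move=> hr.
transitivity (\sum_(s : box K | mle (bval s) r) f (bval s) * g (msub r (bval s))).
  transitivity (\sum_(s : box (mmax r) | mle (bval s) r)
                  f (bval s) * g (msub r (bval s))).
    apply: eq_big => s; first by apply: eq_forallb => i; rewrite ffunE.
    by move=> _; congr (_ * g _); apply/ffunP => i; rewrite !ffunE.
  apply: (sum_box_transfer (P := mle^~ r) (fun m => f m * g (msub r m))).
  move=> m /forallP hm; apply/andP; split; apply/forallP => i.
    exact: leq_trans (hm i) (forallP (in_box_mmax r) i).
  exact: leq_trans (hm i) (forallP hr i).
rewrite big_mkcond; apply: eq_bigr => s _.
have e t : (madd (bval s) t == r) = mle (bval s) r && (t == msub r (bval s)).
  apply/eqP/andP => [<- | [/forallP hl /eqP ->]].
    split; first by apply/forallP => i; rewrite !ffunE leq_addr.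
    by apply/eqP/ffunP => i; rewrite !ffunE addKn.
  by apply/ffunP => i; rewrite !ffunE subnKC // -(ffunE (fun i => (s i : nat))) hl.
case: (boolP (mle (bval s) r)) => hl; last by rewrite big1 // => t _; rewrite e (negbTE hl).
under eq_bigr => t _ do rewrite e hl /=.
rewrite (sum_box_delta (G := fun m => f (bval s) * g m)) // => /negP []; apply/forallP => i.
by rewrite ffunE (leq_trans (leq_subr _ _)) // (forallP hr).
Qed.

Lemma cmulC (f g : coefs A n) r : cmul f g r = cmul g f r.
Proof.
rewrite !(cmul_box _ _ (in_box_mmax r)) exchange_big.
by apply: eq_bigr => t _; apply: eq_bigr => s _; rewrite maddC mulrC.
Qed.

Lemma cmulDl (f g h : coefs A n) r :
  cmul (fun m => f m + g m) h r = cmul f h r + cmul g h r.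
Proof. by rewrite /cmul -big_split; apply: eq_bigr => s _; rewrite mulrDl. Qed.

Lemma cmul_box3 (f g h : coefs A n) r : cmul f (cmul g h) r =
  \sum_(u : box (mmax r)) \sum_(v : box (mmax r)) \sum_(w : box (mmax r))
   (if madd (bval u) (madd (bval v) (bval w)) == r
    then f (bval u) * (g (bval v) * h (bval w)) else 0).
Proof.
have hr := in_box_mmax r.
rewrite (cmul_box _ _ hr); apply: eq_bigr => u _.
transitivity (\sum_(t : box (mmax r)) \sum_(v : box (mmax r)) \sum_(w : box (mmax r))
  (if bval t == madd (bval v) (bval w) then
    (if madd (bval u) (bval t) == r then f (bval u) * (g (bval v) * h (bval w)) else 0)
   else 0)).
  apply: eq_bigr => t _; case: ifP => e.
    have ht : in_box (mmax r) (bval t) by apply: (@in_box_maddr _ (bval u)); rewrite (eqP e).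
    rewrite (cmul_box _ _ ht) mulr_sumr; apply: eq_bigr => v _.
    rewrite mulr_sumr; apply: eq_bigr => w _.
    by rewrite eq_sym; case: ifP => _; rewrite ?mulr0.
  by rewrite big1 // => v _; rewrite big1 // => w _; case: ifP.
rewrite exchange_big; apply: eq_bigr => v _; rewrite exchange_big; apply: eq_bigr => w _.
rewrite (sum_box_delta (G := fun m => if madd (bval u) m == r
   then f (bval u) * (g (bval v) * h (bval w)) else 0)) //.
by case: eqP => // e /negP []; apply: (@in_box_maddr _ (bval u)); rewrite e.
Qed.

Lemma cmulA (f g h : coefs A n) r : cmul f (cmul g h) r = cmul (cmul f g) h r.
Proof.
rewrite [RHS]cmulC !cmul_box3 [RHS]exchange_big; apply: eq_bigr => u _.
rewrite exchange_big; apply: eq_bigr => v _; apply: eq_bigr => w _.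
by rewrite [madd (bval v) _]maddC -maddA [h (bval v) * _]mulrC -mulrA.
Qed.

Lemma coneE (m : mindex n) : @cone A n m = if m == mzero then 1 else 0.
Proof.
rewrite /cone; congr (if _ then _ else _); apply/forallP/eqP => [h|->].
  by apply/ffunP => i; rewrite ffunE; apply/eqP.
by move=> i; rewrite ffunE.
Qed.

Lemma cmul1 (f : coefs A n) r : cmul (@cone A n) f r = f r.
Proof.
rewrite (cmul_box _ _ (in_box_mmax r)).
under eq_bigr => s _ do under eq_bigr => t _ do rewrite coneE.
transitivity (\sum_(s : box (mmax r)) (if bval s == mzero then
  \sum_(t : box (mmax r)) (if madd mzero (bval t) == r then f (bval t) else 0) else 0)).
  apply: eq_bigr => s _; case: eqP => [->|_].
    by apply: eq_bigr => t _; rewrite mul1r.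
  by apply: big1 => t _; rewrite mul0r if_same.
rewrite (sum_box_delta (G := fun=> \sum_(t : box (mmax r))
   (if madd mzero (bval t) == r then f (bval t) else 0))); last by rewrite in_box_mzero.
under eq_bigr => t _ do rewrite madd0m.
by rewrite (sum_box_delta (G := f)) // in_box_mmax.
Qed.

End Convolution.

Section SeriesRing.
Variables (A : comPzRingType) (n : nat).

Definition series : Type := coefs A n.

(* The choice structure on function types is the classical one of [boolp]. *)
HB.instance Definition _ := Choice.on series.

Definition series_zero : series := fun=> 0.
Definition series_add (f g : series) : series := fun r => f r + g r.
Definition series_opp (f : series) : series := fun r => - f r.

Lemma series_addA : associative series_add.
Proof. by move=> f g h; apply/funext => r; apply: addrA. Qed.
Lemma series_addC : commutative series_add.
Proof. by move=> f g; apply/funext => r; apply: addrC. Qed.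
Lemma series_add0 : left_id series_zero series_add.
Proof. by move=> f; apply/funext => r; apply: add0r. Qed.
Lemma series_addN : left_inverse series_zero series_opp series_add.
Proof. by move=> f; apply/funext => r; apply: addNr. Qed.

HB.instance Definition _ :=
  GRing.isZmodule.Build series series_addA series_addC series_add0 series_addN.

Lemma series_mulA : associative (@cmul A n : series -> series -> series).
Proof. by move=> f g h; apply/funext => r; apply: cmulA. Qed.
Lemma series_mulC : commutative (@cmul A n : series -> series -> series).
Proof. by move=> f g; apply/funext => r; apply: cmulC. Qed.
Lemma series_mul1 : left_id (@cone A n : series) (@cmul A n).
Proof. by move=> f; apply/funext => r; apply: cmul1. Qed.
Lemma series_mulDl : left_distributive (@cmul A n : series -> series -> series) +%R.
Proof. by move=> f g h; apply/funext => r; apply: cmulDl. Qed.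

HB.instance Definition _ :=
  GRing.Zmodule_isComPzRing.Build series series_mulA series_mulC series_mul1 series_mulDl.

Lemma series_addE (f g : series) r : (f + g) r = f r + g r. Proof. by []. Qed.
Lemma series_mulE (f g : series) : f * g = cmul f g. Proof. by []. Qed.
Lemma series_oneE : (1 : series) = @cone A n. Proof. by []. Qed.

Lemma series_sumE (I : finType) (F : I -> series) r : (\sum_i F i) r = \sum_i F i r.
Proof. by apply: (big_rec2 (fun (f : series) c => f r = c)) => // i f c _ <-. Qed.

Lemma cpowE (f : coefs A n) k : cpow f k = (f : series) ^+ k.
Proof. by elim: k => [|k IH] //; rewrite exprS -IH. Qed.

End SeriesRing.

Section FrobeniusSum.
Variables (R : comPzRingType) (p : nat).
Hypotheses (hp : prime p) (hchar : p%:R = 0 :> R).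

Lemma exprD_char (x y : R) : (x + y) ^+ p = x ^+ p + y ^+ p.
Proof.
case: p hp hchar => [//|p'] hp' hchar'.
rewrite exprDn big_ord_recr big_ord_recl /= subnn subn0 expr0 mulr1 mul1r bin0 binn.
rewrite !mulr1n big1 ?add0r ?addr0 // => i _.
have /dvdnP [k ->] : (p'.+1 %| 'C(p'.+1, bump 0 i))%N.
  by apply: prime_dvd_bin => //; rewrite /bump /= add1n ltnS ltn_ord.
by rewrite mulrnA -mulr_natr hchar' mulr0.
Qed.

Lemma expr_sum_char (I : finType) (F : I -> R) : (\sum_i F i) ^+ p = \sum_i F i ^+ p.
Proof.
apply: (big_rec2 (fun x y => x ^+ p = y)); first by rewrite expr0n eqn0Ngt prime_gt0.
by move=> i x y _ <-; rewrite exprD_char.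
Qed.

End FrobeniusSum.

Section Monomials.
Variables (A : comPzRingType) (n : nat).
Local Notation series := (series A n).

Definition monomial (c : A) (m : mindex n) : series := fun r => if r == m then c else 0.

Definition mscale (k : nat) (m : mindex n) : mindex n := [ffun i => (k * m i)%N].

Lemma series_char p : p%:R = 0 :> A -> p%:R = 0 :> series.
Proof.
move=> hchar; apply/funext => r.
have mulrnE k : ((1 : series) *+ k) r = (1 : series) r *+ k.
  by elim: k => // k IH; rewrite !mulrS series_addE IH.
by rewrite mulrnE -mulr_natr hchar mulr0.
Qed.

Lemma monomialM c d s t : monomial c s * monomial d t = monomial (c * d) (madd s t).
Proof.
apply/funext => r; rewrite series_mulE (cmul_box _ _ (in_box_mmax r)).
have hr := in_box_mmax r.
transitivity (\sum_(u : box n (mmax r)) (if bval u == s then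
  \sum_(v : box n (mmax r)) (if bval v == t then
     (if madd s t == r then c * d else 0) else 0) else 0)).
  apply: eq_bigr => u _; rewrite /monomial.
  case: (bval u =P s) => [->|_]; last by apply: big1 => v _; rewrite mul0r if_same.
  by apply: eq_bigr => v _; case: (bval v =P t) => [->|_]; rewrite ?mulr0 ?if_same.
rewrite (sum_box_delta (G := fun=> \sum_(v : box n (mmax r)) (if bval v == t then
     (if madd s t == r then c * d else 0) else 0))).
  rewrite (sum_box_delta (G := fun=> if madd s t == r then c * d else 0)).
    by rewrite /monomial eq_sym.
  by case: eqP => // e /negP []; apply: (@in_box_maddr _ _ s); rewrite e.
move=> hs; apply: big1 => v _; case: (bval v =P t) => // _.
by case: (madd s t =P r) => // e; move: hs; rewrite (@in_box_maddl _ _ _ t) // e.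
Qed.

Lemma monomialX c s k : monomial c s ^+ k = monomial (c ^+ k) (mscale k s).
Proof.
elim: k => [|k IH].
  apply/funext => r; rewrite expr0 series_oneE coneE /monomial.
  by congr (if _ then _ else _); congr (_ == _); apply/ffunP => i; rewrite !ffunE.
rewrite exprS IH monomialM -exprS; congr (monomial _ _).
by apply/ffunP => i; rewrite !ffunE mulSn.
Qed.

Lemma series_monomial_sum (f : coefs A n) N :
  (forall r : mindex n, (exists i, (N <= r i)%N) -> f r = 0) ->
  (f : series) = \sum_(s : box n N) monomial (f (bval s)) (bval s).
Proof.
move=> hN; apply/funext => r; rewrite series_sumE.
under eq_bigr => s _ do rewrite /monomial eq_sym.
rewrite (sum_box_delta (G := f)) // => /forallPn [i hi]; apply: hN; exists i.
by rewrite ltnW // ltnNge.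
Qed.

End Monomials.

Section Psi.
Variables (A : comPzRingType) (n p' : nat) (a : 'I_n -> A).
Hypotheses (p'_gt0 : (0 < p')%N) (hchar : p'.+1%:R = 0 :> A).
Local Notation p := p'.+1.
Local Notation pbox := (box n p').

Definition weight (m : mindex n) : A := \prod_(i < n) (a i ^+ (p' - m i) * (m i)`!%:R).
Definition shift (q : mindex n) (t : pbox) : mindex n := madd (mscale p q) (bval t).
Definition psi q (h : coefs A n) : A := \sum_(t : pbox) weight (bval t) * h (shift q t).

Definition box_incr i (t : pbox) : pbox :=
  [ffun j => if j == i then inord (t j).+1 else t j].
Definition box_decr i (t : pbox) : pbox :=
  [ffun j => if j == i then inord (t j).-1 else t j].

Lemma bval_box_incr i (t : pbox) j : (t i < p')%N ->
  bval (box_incr i t) j = if j == i then (t i).+1 else t j.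
Proof. by move=> ht; rewrite !ffunE; case: eqP => [->|//]; rewrite inordK. Qed.

Lemma box_decr_incr i (t : pbox) : (t i < p')%N -> box_decr i (box_incr i t) = t.
Proof.
move=> ht; apply/ffunP => j; rewrite !ffunE; case: eqP => [->|//].
by apply: val_inj; rewrite /= inordK ?inordK // ltnS ltnW.
Qed.

Lemma sum_box_incr i (F : pbox -> A) :
  \sum_(t : pbox | (t i < p')%N) F (box_incr i t) = \sum_(t : pbox | (0 < t i)%N) F t.
Proof.
rewrite (reindex_onto (box_decr i) (box_incr i)) => [|t]; last exact: box_decr_incr.
apply: eq_big => [t|t /andP [_ /eqP -> //]]; have ti_le : (t i <= p')%N by rewrite -ltnS.
have decr_val : (box_decr i t i = (t i).-1 :> nat).
  by rewrite ffunE eqxx inordK // (leq_ltn_trans (leq_pred _)).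
case: (posnP (t i)) => ti0.
  apply/negbTE; rewrite negb_and; apply/orP; right; apply/eqP => /ffunP /(_ i).
  by rewrite !ffunE eqxx => /(congr1 val) /=; rewrite ti0 !inordK.
have -> /= : (box_decr i t i < p')%N by rewrite decr_val (leq_trans _ ti_le) // ltn_predL.
apply/eqP/ffunP => j; rewrite !ffunE; case: eqP => [->|//].
by apply: val_inj; move: decr_val; rewrite ffunE eqxx /= => ->; rewrite prednK // inordK.
Qed.

Lemma natr_char_mulD (k m : nat) : ((p * k + m)%N%:R : A) = m%:R.
Proof. by rewrite natrD natrM hchar mul0r add0r. Qed.

Lemma weight_box_incr i (t : pbox) : (t i < p')%N ->
  weight (bval t) * (t i).+1%:R = a i * weight (bval (box_incr i t)).
Proof.
move=> ht; rewrite /weight (bigD1 i) //= [in RHS](bigD1 i) //=.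
rewrite (bval_box_incr _ ht) eqxx [in LHS]ffunE.
have -> : \prod_(j < n | j != i)
      (a j ^+ (p' - bval (box_incr i t) j) * (bval (box_incr i t) j)`!%:R)
    = \prod_(j < n | j != i) (a j ^+ (p' - bval t j) * (bval t j)`!%:R).
  by apply: eq_bigr => j hj; rewrite (bval_box_incr _ ht) (negbTE hj) ffunE.
rewrite -(subnSK ht) exprS factS natrM -!mulrA; congr (_ * (_ * _)).
by rewrite [RHS]mulrCA; congr (_ * _); rewrite mulrC.
Qed.

Lemma shift_box_incr i (t : pbox) q : (t i < p')%N ->
  [ffun j => (shift q t j + (j == i))%N] = shift q (box_incr i t).
Proof.
move=> ht; apply/ffunP => j; rewrite !ffunE.
by case: eqP => [->|_]; rewrite ?addn0 // inordK // addn1 addnS.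
Qed.

Definition psi_cofactor i (H : coefs A n) q : A := - \sum_(t : pbox | bval t i == 0%N)
   (\prod_(j < n | j != i) (a j ^+ (p' - bval t j) * (bval t j)`!%:R)) * H (shift q t).

Lemma psi_deriv i H q :
  \sum_(t : pbox) weight (bval t) * (cderiv i H (shift q t) - a i * H (shift q t)) =
  psi_cofactor i H q * a i ^+ p.
Proof.
set S := \sum_(t : pbox | (0 < t i)%N) weight (bval t) * H (shift q t).
have deriv_part : \sum_(t : pbox) weight (bval t) * cderiv i H (shift q t) = a i * S.
  rewrite (bigID (fun t : pbox => (t i < p')%N)) /= [X in _ + X]big1 ?addr0; last first.
    move=> t ht; rewrite /cderiv.
    have -> : shift q t i = (p * q i + p')%N.
      by rewrite !ffunE; congr (_ + _)%N; apply/eqP; rewrite eqn_leq -ltnS ltn_ord leqNgt.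
    by rewrite -addnS natr_char_mulD hchar mul0r mulr0.
  rewrite /S -sum_box_incr mulr_sumr; apply: eq_bigr => t ht.
  rewrite /cderiv shift_box_incr // mulrA.
  have -> : (shift q t i).+1%:R = (t i).+1%:R :> A by rewrite !ffunE -addnS natr_char_mulD.
  by rewrite weight_box_incr // mulrA.
have mul_part : \sum_(t : pbox) weight (bval t) * (a i * H (shift q t)) =
    a i * S + a i * \sum_(t : pbox | bval t i == 0%N) weight (bval t) * H (shift q t).
  rewrite (bigID (fun t : pbox => (0 < t i)%N)) /= !mulr_sumr.
  congr (_ + _); first by apply: eq_bigr => t _; rewrite mulrCA.
  apply: eq_big => t; first by rewrite ffunE lt0n negbK.
  by move=> _; rewrite mulrCA.
under eq_bigr => t _ do rewrite mulrBr.
rewrite sumrB deriv_part mul_part opprD addrA subrr add0r /psi_cofactor mulNr.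
congr (- _); rewrite mulr_sumr mulr_suml; apply: eq_bigr => t /eqP ht.
rewrite /weight (bigD1 i) //= ht subn0 fact0 mulr1 exprS.
by rewrite [RHS]mulrC -!mulrA.
Qed.

Lemma psi_Dmap (h : 'I_n -> coefs A n) q :
  psi q (Dmap a h) = \sum_i psi_cofactor i (h i) q * a i ^+ p.
Proof.
rewrite /psi /Dmap; under eq_bigr => t _ do rewrite mulr_sumr.
by rewrite exchange_big; apply: eq_bigr => i _; apply: psi_deriv.
Qed.

Lemma eq_mscale (u v : mindex n) : (mscale p u == mscale p v) = (u == v).
Proof.
apply/eqP/eqP => [/ffunP h|->] //; apply/ffunP => i.
by have := h i; rewrite !ffunE => /eqP; rewrite eqn_pmul2l // => /eqP.
Qed.

Section PsiOfPower.
Hypothesis hp : prime p.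
Variables (f : coefs A n) (N : nat).
Hypothesis hN : forall r : mindex n, (exists i, (N <= r i)%N) -> f r = 0.

Lemma coef_cpow_char q (t : pbox) :
  cpow f p (shift q t) = if bval t == mzero n then f q ^+ p else 0.
Proof.
rewrite cpowE {1}(series_monomial_sum hN) expr_sum_char //; last exact: series_char.
rewrite series_sumE; under eq_bigr => s _ do rewrite monomialX.
case: (bval t =P mzero n) => ht.
  rewrite /shift ht maddC madd0m.
  under eq_bigr => s _ do rewrite /monomial eq_mscale eq_sym.
  rewrite (sum_box_delta (G := fun m => f m ^+ p)) // => /forallPn [i hi].
  by rewrite hN ?expr0n //; exists i; rewrite ltnW // ltnNge.
apply: big1 => s _; rewrite /monomial; case: eqP => // e; exfalso; apply: ht.
apply/ffunP => i; have := congr1 (fun m : mindex n => (m i %% p)%N) e.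
rewrite /= !ffunE [(p * q i)%N]mulnC modnMDl modn_small ?ltn_ord //.
by rewrite [(p * _)%N]mulnC modnMl.
Qed.

Lemma psi_cpow_char q : psi q (cpow f p) = (\prod_i a i ^+ p') * f q ^+ p.
Proof.
rewrite /psi (eq_bigr (fun t : pbox =>
    if bval t == mzero n then weight (bval t) * f q ^+ p else 0)); last by move=> t _; rewrite coef_cpow_char; case: ifP; rewrite ?mulr0.
rewrite (sum_box_delta (G := fun m => weight m * f q ^+ p)) ?in_box_mzero //.
by congr (_ * _); apply: eq_bigr => i _; rewrite ffunE subn0 fact0 mulr1.
Qed.

End PsiOfPower.

End Psi.

Unset Implicit Arguments.

Theorem corollary2p6 (p : nat) (A : comPzRingType) (n : nat)
  (hp : prime p) (hchar : p%:R = 0 :> A)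
  (a : 'I_n -> A) (hreg : regular_seq a)
  (f : coefs A n) (hf : finsupp f) :
  (exists h : 'I_n -> coefs A n,
      (forall i, finsupp (h i)) /\ cpow f p = Dmap a h) ->
  forall r : mindex n, in_ideal a (f r ^+ p).
Proof.
move=> [h [_ hD]] q; case: hf => N hN.
case: p hp hchar hD => [//|p'] hp hchar hD.
have p'_gt0 : (0 < p')%N by case: p' hp {hchar hD}.
apply: (regular_seq_colon (k := p') hreg).
exists (fun i => psi_cofactor p' a i (h i) q).
by rewrite mulrC -(psi_cpow_char a hchar hp hN) hD psi_Dmap.
Qed.
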